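(* Let $K$ be a Cantor set and let $G$ be a nonempty full subgraph of $\mathscr{C}(K)$ which is invariant under the action of $\mathrm{Homeo}(K)$ (given by $f(U\sqcup V)=f(U)\sqcup f(V)$). Then $G$, with its own graph metric, has diameter exactly $2$.
   Context: A cut of a Stone space $X$ (compact, Hausdorff, totally disconnected) is an unordered partition of $X$ into two disjoint clopen sets $U,V$, written $U\sqcup V$; it is non-peripheral if each of $U,V$ contains at least two points. Two cuts $U\sqcup V$, $U'\sqcup V'$ cross if all four sets $U\cap U'$, $U\cap V'$, $V\cap U'$, $V\cap V'$ are nonempty; otherwise they are compatible. The complex of cuts $\mathscr{C}(X)$ is the simplicial graph whose vertices are the non-peripheral cuts of $X$, with edges between distinct compatible cuts. A full subgraph is an induced subgraph on a subset of the vertices. *)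

From HB Require Import structures.
From mathcomp Require Import all_boot all_order all_algebra.
From mathcomp Require Import all_classical all_reals all_analysis.
Set Implicit Arguments. Unset Strict Implicit. Unset Printing Implicit Defensive.
Local Open Scope classical_set_scope.

Definition homeo (S T : topologicalType) (f : S -> T) : Prop :=
  continuous f /\ exists g : T -> S, [/\ cancel f g, cancel g f & continuous g].

(* A cut of X, as an unordered pair {U, V} of disjoint clopen sets covering X;
   necessarily V = ~` U. It is represented as the set of its two blocks. *)
Definition is_cut (T : topologicalType) (C : set (set T)) : Prop :=
  exists U : set T, clopen U /\ C = [set W | W = U \/ W = ~` U].

Definition nonperipheral (T : topologicalType) (C : set (set T)) : Prop :=
  forall W, C W -> exists x y, [/\ x <> y, W x & W y].

Definition cut_vertex (T : topologicalType) (C : set (set T)) : Prop :=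
  is_cut C /\ nonperipheral C.

Definition cross (T : topologicalType) (C D : set (set T)) : Prop :=
  forall W W', C W -> D W' -> W `&` W' !=set0.

Definition cut_adj (T : topologicalType) (C D : set (set T)) : Prop :=
  C <> D /\ ~ cross C D.

Definition cut_image (T : topologicalType) (f : T -> T) (C : set (set T))
  : set (set T) := (fun W => f @` W) @` C.

(* full subgraph of C(T) on vertex set G (G must consist of vertices) *)
Definition full_subgraph (T : topologicalType) (G : set (set (set T))) : Prop :=
  G `<=` [set C | cut_vertex C].

Definition homeo_invariant (T : topologicalType) (G : set (set (set T))) : Prop :=
  forall f : T -> T, homeo f -> forall C, G C -> G (cut_image f C).

Definition walk_in (T : topologicalType) (G : set (set (set T)))
  (n : nat) (C D : set (set T)) : Prop :=
  exists s : nat -> set (set T),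
    [/\ s 0%N = C, s n = D, (forall i, (i <= n)%N -> G (s i))
      & (forall i, (i < n)%N -> cut_adj (s i) (s i.+1))].

Definition dist_le (T : topologicalType) (G : set (set (set T)))
  (n : nat) (C D : set (set T)) : Prop :=
  exists2 k, (k <= n)%N & walk_in G k C D.

Definition diameter_eq (T : topologicalType) (G : set (set (set T))) (n : nat)
  : Prop :=
  (forall C D, G C -> G D -> dist_le G n C D) /\
  (exists C D, [/\ G C, G D & ~ dist_le G n.-1 C D]).

From HB Require Import structures.
From mathcomp Require Import all_boot all_order all_algebra.
From mathcomp Require Import all_classical all_reals all_analysis.
From mathcomp Require Import Rstruct.
Set Implicit Arguments. Unset Strict Implicit. Unset Printing Implicit Defensive.
Local Open Scope classical_set_scope.

(* Every nonempty proper clopen subset of a Cantor set K is again a Cantor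
   set, so any two of them are exchanged by a homeomorphism of K; a nonempty
   Homeo(K)-invariant set of cuts therefore contains every cut.  Given cuts
   U | U' and V | V', swap V and V' if needed so that U meets V; any proper
   clopen W strictly inside U `&` V then gives a cut compatible with both,
   whence distance at most 2.  Splitting each side of a cut U | U' by a
   clopen set yields a cut crossing U | U', which is therefore at distance
   exactly 2. *)

Definition proper_clopen (T : topologicalType) (U : set T) : Prop :=
  [/\ clopen U, U !=set0 & ~` U !=set0].

Definition clopen_homogeneous (T : topologicalType) : Prop :=
  forall U V : set T, proper_clopen U -> proper_clopen V ->
    exists2 f : T -> T, homeo f & f @` U = V.

Lemma image_cancel (S T : Type) (f : S -> T) (g : T -> S) (A : set S) :
  cancel f g -> cancel g f -> f @` A = g @^-1` A.
Proof.
move=> fK gK; apply/seteqP; split=> y.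
  by case=> x Ax <-; rewrite /= fK.
by move=> Ay; exists (g y); rewrite ?gK.
Qed.

Lemma homeo_comp (R S T : topologicalType) (f : R -> S) (g : S -> T) :
  homeo f -> homeo g -> homeo (g \o f).
Proof.
move=> [cf [f' [fK f'K cf']]] [cg [g' [gK g'K cg']]]; split.
  by move=> x; apply: continuous_comp; [exact: cf | exact: cg].
exists (f' \o g'); split; [exact: can_comp | exact: can_comp |].
by move=> x; apply: continuous_comp; [exact: cg' | exact: cf'].
Qed.

Lemma compact_hausdorff_homeo (S T : topologicalType) (f : S -> T) :
  compact [set: S] -> hausdorff_space T -> continuous f -> bijective f ->
  homeo f.
Proof.
move=> cptS hsdfT cf [g fK gK]; split => //; exists g; split => //.
apply/continuous_closedP => A clA; rewrite -(image_cancel _ fK gK).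
apply: (compact_closed hsdfT); apply: continuous_compact.
  exact/continuous_subspaceT.
exact: subclosed_compact clA cptS _.
Qed.

Lemma continuous_patch (S T : topologicalType) (A : set S) (f g : S -> T) :
  clopen A -> continuous f -> continuous g ->
  continuous (fun x => if `[< A x >] then f x else g x).
Proof.
move=> [oA clA] cf cg; apply/continuousP => B oB.
have -> : (fun x => if `[< A x >] then f x else g x) @^-1` B =
    (A `&` f @^-1` B) `|` (~` A `&` g @^-1` B).
  apply/seteqP; split=> x /=; case: asboolP => Ax Bx.
  - by left.
  - by right.
  - by case: Bx => [[]|[/(_ Ax)]].
  - by case: Bx => [[/Ax]|[]].
apply: openU; apply: openI; [exact: oA | | exact: closed_openC |].
- by move/continuousP: cf; apply.
- by move/continuousP: cg; apply.
Qed.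

Lemma zero_dimensional_hausdorff (T : topologicalType) :
  zero_dimensional T -> hausdorff_space T.
Proof.
move=> zdT; rewrite open_hausdorff => x y xy.
have [V [[oV cV] Vx nVy]] := zdT _ _ xy.
exists (V, ~` V) => /=; first by split; exact: mem_set.
split => //; first exact: closed_openC.
by apply/eqP; rewrite setICr.
Qed.

Section HomeoTransfer.
Variables (S T : topologicalType) (f : S -> T).
Hypothesis homeo_f : homeo f.

Lemma homeo_zero_dimensional : zero_dimensional T -> zero_dimensional S.
Proof.
have [cf [g [fK _ _]]] := homeo_f; move=> zdT x y /eqP xy.
have /zdT [V [clV Vx Vy]] : f x != f y by apply/eqP => /(can_inj fK).
by exists (f @^-1` V); split => //; exact: preimage_clopen.
Qed.

Lemma homeo_perfect : perfect_set [set: T] -> perfect_set [set: S].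
Proof.
have [_ [g [fK gK cg]]] := homeo_f; move=> /perfectTP pT.
apply/perfectTP => x ox; apply: (pT (f x)).
rewrite -image_set1 (image_cancel _ fK gK).
by move/continuousP: cg; apply.
Qed.

Lemma proper_clopen_image (U : set S) :
  proper_clopen U -> proper_clopen (f @` U).
Proof.
have [_ [g [fK gK cg]]] := homeo_f.
move=> [clU [x Ux] [y nUy]]; rewrite (image_cancel _ fK gK); split.
- exact: preimage_clopen.
- by exists (f x); rewrite /= fK.
- by exists (f y); rewrite /= fK.
Qed.

Lemma homeo_clopen_homogeneous :
  clopen_homogeneous T -> clopen_homogeneous S.
Proof.
have [cf [g [fK gK cg]]] := homeo_f; move=> homT U V pU pV.
have [h hh hUV] := homT _ _ (proper_clopen_image pU) (proper_clopen_image pV).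
have homeo_g : homeo g by split => //; exists f.
exists (g \o (h \o f)); first by apply: homeo_comp => //; exact: homeo_comp.
rewrite -[LHS]image_comp -[(h \o f) @` U]image_comp hUV image_comp.
by apply: eq_image_id => x _; exact: fK.
Qed.
End HomeoTransfer.

Section ClopenPiece.
Variables (R : realType) (U : set cantor_space) (x0 : cantor_space).
Hypotheses (clU : clopen U) (Ux0 : U x0).

(* The unused argument lets the type determine the base point of the
   pointed instance, which [homeomorphism_cantor_like] requires. *)
Definition cantor_piece of U x0 : Type := set_type U.
Local Notation piece := (cantor_piece Ux0).
HB.instance Definition _ := Choice.on piece.
HB.instance Definition _ := isPointed.Build piece (exist _ x0 (mem_set Ux0)).
HB.instance Definition _ := Uniform.on piece.
HB.instance Definition _ : @PseudoMetric R _ := @PseudoMetric.on piece.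

Let piece_val : piece -> cantor_space := val.

Lemma piece_val_continuous : continuous piece_val.
Proof. exact: initial_continuous. Qed.

Lemma piece_zero_dimensional : zero_dimensional piece.
Proof.
move=> x y xy.
have /cantor_zero_dimensional [V [clV Vx nVy]] : piece_val x != piece_val y.
  by apply: contra xy => /eqP/val_inj ->.
exists (piece_val @^-1` V); split => //.
exact: preimage_clopen piece_val_continuous.
Qed.

Lemma piece_perfect : perfect_set [set: piece].
Proof.
apply/perfectTP => x [A oA Ax1].
apply: (perfectTP.1 cantor_perfect (piece_val x)).
suff -> : [set piece_val x] = A `&` U by apply: openI => //; case: clU.
apply/seteqP; split=> [_ ->|y [Ay Uy]].
  by split; [rewrite -[A _]/((piece_val @^-1` A) x) Ax1 | exact/set_mem/valP].
suff : (piece_val @^-1` A) (exist _ y (mem_set Uy)) by rewrite Ax1 => <-.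
exact: Ay.
Qed.

Definition piece_retraction (y : cantor_space) : piece :=
  if pselect (U y) is left Uy then exist _ y (mem_set Uy) else point.

Lemma piece_retraction_continuous : continuous piece_retraction.
Proof.
apply: continuous_comp_initial.
have -> : piece_val \o piece_retraction = fun y => if `[< U y >] then y else x0.
  apply/funext => y; rewrite /piece_retraction /=.
  by case: pselect; case: asboolP.
apply: continuous_patch => //; first by move=> ?; exact: cvg_id.
exact: cst_continuous.
Qed.

Lemma piece_compact : compact [set: piece].
Proof.
have -> : [set: piece] = piece_retraction @` setT.
  apply/seteqP; split => // x _; exists (piece_val x) => //.
  rewrite /piece_retraction; case: pselect => [Ux|]; first exact: val_inj.
  by case; exact/set_mem/valP.
apply: continuous_compact; last exact: cantor_space_compact.
exact/continuous_subspaceT/piece_retraction_continuous.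
Qed.

Lemma piece_cantor_like : cantor_like piece.
Proof.
split; [exact: piece_perfect | exact: piece_compact | |].
  exact/zero_dimensional_hausdorff/piece_zero_dimensional.
exact: piece_zero_dimensional.
Qed.
End ClopenPiece.

Lemma clopen_cantor_parametrization (U : set cantor_space) :
  clopen U -> U !=set0 ->
  exists h : cantor_space -> cantor_space,
    [/\ continuous h, injective h & range h = U].
Proof.
move=> clU [x0 Ux0].
have [f [cf _]] :=
  @homeomorphism_cantor_like Rdefinitions.R (cantor_piece Ux0)
    (piece_cantor_like clU Ux0).
exists (val \o f); split.
- move=> x; apply: continuous_comp; first exact: cf.
  exact: piece_val_continuous.
- by move=> a b /val_inj; apply: (bij_inj (bijTT (f := f))).
- apply/seteqP; split=> [_ [c _ <-]|y Uy]; first exact/set_mem/valP.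
  have [c _ fc] := (@set_bij_surj _ _ _ _ f bij) (exist _ y (mem_set Uy)) I.
  by exists c => //=; rewrite fc.
Qed.

Lemma continuous_cantor_coord (X : topologicalType) (f : X -> cantor_space) :
  (forall n, continuous (fun x => f x n)) -> continuous f.
Proof.
move=> cf x; apply/(@cvg_sup _ _ (fun i => Topological.class
  (initial_topology (fun g : nat -> bool => g i))) _ (f x)) => i.
exact: (@continuous_comp_initial _ X _ (fun g : nat -> bool => g i) f (cf i) x).
Qed.

Definition cantor_tail (x : cantor_space) : cantor_space := fun n => x n.+1.
Definition cantor_cons (b : bool) (c : cantor_space) : cantor_space :=
  fun n => if n is k.+1 then c k else b.

Lemma cantor_tail_continuous : continuous cantor_tail.
Proof.
by apply: continuous_cantor_coord => n; exact: (@proj_continuous _ _ n.+1).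
Qed.

Definition cantor_head_set : set cantor_space := [set x | x 0%N].

Lemma cantor_head_set_clopen : clopen cantor_head_set.
Proof.
change (clopen ((proj 0%N : cantor_space -> bool) @^-1` [set true])).
apply: preimage_clopen; last exact: proj_continuous.
by split; [exact: discrete_open | exact: discrete_closed].
Qed.

Lemma cantor_head_set_homeo (U : set cantor_space) : proper_clopen U ->
  exists2 F : cantor_space -> cantor_space, homeo F & F @` cantor_head_set = U.
Proof.
move=> [clU nU nCU].
have [h1 [c1 i1 r1]] := clopen_cantor_parametrization clU nU.
have [h2 [c2 i2 r2]] := clopen_cantor_parametrization (clopenC U clU) nCU.
pose F (x : cantor_space) : cantor_space :=
  if x 0%N then h1 (cantor_tail x) else h2 (cantor_tail x).
have FU x : U (F x) <-> x 0%N.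
  rewrite /F; case: (x 0%N); split => // h.
    by rewrite -r1; exists (cantor_tail x).
  have : (~` U) (h2 (cantor_tail x)) by rewrite -r2; exists (cantor_tail x).
  by move/(_ h).
have Finj : injective F.
  move=> a b eab; have e0 : a 0%N = b 0%N.
    by apply/idP/idP => h; apply/FU; [rewrite -eab | rewrite eab]; exact/FU.
  have et : cantor_tail a = cantor_tail b.
    by move: eab; rewrite /F e0; case: (b 0%N) => [/i1|/i2].
  by apply/funext => -[|n] //; exact: (congr1 (fun c => c n) et).
have Fsurj y : exists x, F x = y.
  have [Uy|nUy] := pselect (U y).
    by move: Uy; rewrite -r1 => -[c _ <-]; exists (cantor_cons true c).
  have : (~` U) y := nUy.
  by rewrite -r2 => -[c _ <-]; exists (cantor_cons false c).
have cF : continuous F.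
  have -> : F = fun x => if `[< cantor_head_set x >] then h1 (cantor_tail x)
      else h2 (cantor_tail x) by apply/funext => x; rewrite asboolb.
  apply: continuous_patch cantor_head_set_clopen _ _ => x;
    apply: continuous_comp;
    by [exact: cantor_tail_continuous | exact: c1 | exact: c2].
have bF : bijective F.
  rewrite -setTT_bijective; split => // [a b _ _|y _]; first exact: Finj.
  by have [x <-] := Fsurj y; exists x.
exists F; first exact: compact_hausdorff_homeo cantor_space_compact
  cantor_space_hausdorff cF bF.
apply/seteqP; split=> [_ [x hx <-]|y Uy]; first exact/FU.
by have [x Fx] := Fsurj y; exists x => //; apply/FU; rewrite Fx.
Qed.

Lemma cantor_clopen_homogeneous : clopen_homogeneous cantor_space.
Proof.
move=> U V pU pV.
have [F hF <-] := cantor_head_set_homeo pU.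
have [H hH <-] := cantor_head_set_homeo pV.
have [cF [Fi [FK FiK cFi]]] := hF.
exists (H \o Fi); first by apply: homeo_comp => //; split => //; exists F.
by rewrite image_comp; congr (_ @` _); apply/funext => x /=; rewrite FK.
Qed.

Section Cuts.
Variable T : topologicalType.
Implicit Types (U V W : set T) (C D : set (set T)).

Definition cut_of U : set (set T) := [set W | W = U \/ W = ~` U].

Lemma cut_ofC U : cut_of (~` U) = cut_of U.
Proof.
by apply/seteqP; split => W [->|->]; rewrite /cut_of ?setCK;
  [right | left | right | left].
Qed.

Lemma cut_image_cut_of (f g : T -> T) U :
  cancel f g -> cancel g f -> cut_image f (cut_of U) = cut_of (f @` U).
Proof.
move=> fK gK; have fUC : f @` (~` U) = ~` (f @` U).
  by rewrite !(image_cancel _ fK gK) preimage_setC.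
apply/seteqP; split=> [_ [W [->|->] <-]|W [->|->]].
- by left.
- by right; exact: fUC.
- by exists U => //; left.
- by exists (~` U); [right | exact: fUC].
Qed.

Lemma cut_vertex_proper C :
  cut_vertex C -> exists2 U, proper_clopen U & C = cut_of U.
Proof.
move=> [[U [clU ->]] np]; exists U => //; split => //.
- by have [x [_ [_ Ux _]]] := np U (or_introl erefl); exists x.
- by have [x [_ [_ Ux _]]] := np (~` U) (or_intror erefl); exists x.
Qed.

Lemma cross_sym C D : cross C D -> cross D C.
Proof. by move=> cCD W W' DW CW'; rewrite setIC; exact: cCD. Qed.

Lemma cut_adj_sym C D : cut_adj C D -> cut_adj D C.
Proof. by move=> [CD ncCD]; split => [DC|/cross_sym//]; exact: CD. Qed.

Lemma cut_adj_subset U W : W `<=` U -> W !=set0 -> U `\` W !=set0 ->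
  cut_adj (cut_of U) (cut_of W).
Proof.
move=> WU [x Wx] [z [Uz nWz]]; split.
  move=> e; have : cut_of W U by rewrite -e; left.
  case=> eU; first by apply: nWz; rewrite -eU.
  by have := WU _ Wx; rewrite eU => /(_ Wx).
move=> c; have [y [nUy Wy]] := c (~` U) W (or_intror erefl) (or_introl erefl).
exact: nUy (WU _ Wy).
Qed.

Variable G : set (set (set T)).

Lemma dist_le2_path C E D : G C -> G E -> G D ->
  cut_adj C E -> cut_adj E D -> dist_le G 2 C D.
Proof.
move=> GC GE GD aCE aED; exists 2%N => //.
exists (fun i => if i == 0%N then C else if i == 1%N then E else D).
by split => //; [case=> [|[|[|i]]] | case=> [|[|i]]].
Qed.

Lemma cross_not_dist_le1 U D :
  cross (cut_of U) D -> ~ dist_le G 1 (cut_of U) D.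
Proof.
move=> c [[|[|k]] // _ [s [s0 sk _ adj]]].
  rewrite -sk s0 in c.
  by have [x []] := c U (~` U) (or_introl erefl) (or_intror erefl).
by apply: (adj 0%N isT).2; rewrite s0 sk.
Qed.
End Cuts.

Section CutGraphDiameter.
Variable T : topologicalType.
Hypotheses (perfectT : perfect_set [set: T]) (zdT : zero_dimensional T).
Hypothesis homogT : clopen_homogeneous T.
Variable G : set (set (set T)).
Hypotheses (fullG : full_subgraph G) (G_neq0 : G !=set0).
Hypothesis invG : homeo_invariant G.

Lemma open_clopen_split (O : set T) : open O -> O !=set0 ->
  exists A : set T, [/\ clopen A, O `&` A !=set0 & O `&` ~` A !=set0].
Proof.
move=> oO nO; have [x [y [Ox Oy xy]]] := perfectTP_ex.1 perfectT O oO nO.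
have [A [clA Ax nAy]] := zdT xy.
by exists A; split => //; [exists x | exists y].
Qed.

Lemma clopen_strict_proper_subset (O : set T) : clopen O -> O !=set0 ->
  exists W : set T, [/\ proper_clopen W, W `<=` O & O `\` W !=set0].
Proof.
move=> clO nO.
have [A [clA [x [Ox Ax]] [y [Oy nAy]]]] := open_clopen_split clO.1 nO.
exists (O `&` A); split => //; last by exists y; split => // -[].
by split; [exact: clopenI | exists x | exists y => -[]].
Qed.

Lemma proper_clopen_crossing (U : set T) : proper_clopen U ->
  exists W : set T, proper_clopen W /\ cross (cut_of U) (cut_of W).
Proof.
move=> [clU nU nCU].
have [A [clA [a1 [Ua1 Aa1]] [a2 [Ua2 nAa2]]]] := open_clopen_split clU.1 nU.
have [B [clB [b1 [nUb1 Bb1]] [b2 [nUb2 nBb2]]]] :=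
  open_clopen_split (closed_openC clU.2) nCU.
pose W := (U `&` A) `|` (~` U `&` B).
have nWa2 : ~ W a2 by case=> -[].
have nWb2 : ~ W b2 by case=> -[].
exists W; split.
  split; first by apply: clopenU; apply: clopenI => //; exact: clopenC.
    by exists a1; left.
  by exists a2.
move=> X Y [->|->] [->|->].
- by exists a1; split => //; left.
- by exists a2.
- by exists b1; split => //; right.
- by exists b2.
Qed.

Lemma homeo_invariant_proper_cut (U : set T) :
  proper_clopen U -> G (cut_of U).
Proof.
move=> pU; have [C0 GC0] := G_neq0.
have [U0 pU0 eC0] := cut_vertex_proper (fullG GC0).
have [f [cf [g [fK gK cg]]] <-] := homogT pU0 pU.
rewrite -(cut_image_cut_of _ fK gK) -eC0.
by apply: invG => //; split => //; exists g.
Qed.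

Lemma cut_graph_dist_le2 (C D : set (set T)) :
  G C -> G D -> dist_le G 2 C D.
Proof.
move=> GC GD.
have [U [clU nU _] eC] := cut_vertex_proper (fullG GC).
have [V [clV UV eD]] :
    exists2 V : set T, clopen V /\ U `&` V !=set0 & D = cut_of V.
  have [U' [clU' _ _] ->] := cut_vertex_proper (fullG GD).
  have [UU'|UU'] := pselect (U `&` U' !=set0); first by exists U'.
  exists (~` U'); last by rewrite cut_ofC.
  split; first exact: clopenC.
  by have [x Ux] := nU; exists x; split => // U'x; apply: UU'; exists x.
have [W [pW WUV [x [[Ux Vx] nWx]]]] :=
  clopen_strict_proper_subset (clopenI clU clV) UV.
have [_ nW _] := pW.
rewrite eC eD; apply: (@dist_le2_path _ _ _ (cut_of W)).
- by rewrite -eC.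
- exact: homeo_invariant_proper_cut.
- by rewrite -eD.
- by apply: cut_adj_subset; [move=> y /WUV [] | exact: nW | exists x].
- apply/cut_adj_sym/cut_adj_subset; first by move=> y /WUV [].
    exact: nW.
  by exists x.
Qed.

Theorem homeo_invariant_cut_graph_diameter : diameter_eq G 2.
Proof.
split; first exact: cut_graph_dist_le2.
have [C0 GC0] := G_neq0; have [U pU eC0] := cut_vertex_proper (fullG GC0).
have [W [pW cUW]] := proper_clopen_crossing pU.
exists (cut_of U), (cut_of W); split.
- by rewrite -eC0.
- exact: homeo_invariant_proper_cut.
- exact: cross_not_dist_le1.
Qed.
End CutGraphDiameter.

Theorem mainTheorem4 (K : topologicalType)
  (hK : exists phi : K -> cantor_space, homeo phi)
  (G : set (set (set K)))
  (hfull : full_subgraph G)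
  (hne : G !=set0)
  (hinv : homeo_invariant G) :
  diameter_eq G 2.
Proof.
have [phi homeo_phi] := hK.
apply: homeo_invariant_cut_graph_diameter hfull hne hinv.
- exact: homeo_perfect homeo_phi cantor_perfect.
- exact: homeo_zero_dimensional homeo_phi cantor_zero_dimensional.
- exact: homeo_clopen_homogeneous homeo_phi cantor_clopen_homogeneous.
Qed.
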